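(* Let $(W,S)$ be a Coxeter system of rank $n$, $(s_1,\dots,s_n)$ an ordering of $S$; let $F_n$ be free on $f_1,\dots,f_n$, $g=f_1\cdots f_n$, $R$ the set of conjugates of $f_1,\dots,f_n$, $\pi:F_n\to W$ the morphism $f_i\mapsto s_i$, and $H\le B_n$ the stabilizer of $(s_1,\dots,s_n)\in W^n$ under the Hurwitz action. Then for every $\beta\in H$ and every $\tilde a\in[1,g]_R$ we have $\pi(\beta\star\tilde a)=\pi(\tilde a)$.
   Context: A Coxeter system $(W,S)$: $W=\langle S\mid (ss')^{m(s,s')}=1\text{ whenever } m(s,s')\neq\infty\rangle$ with $m$ symmetric, $m(s,s)=1$, $m(s,s')\in\{2,3,\dots,\infty\}$ for $s\neq s'$. For a group $G$ with generating set $X$: $\ell_X(a)$ is the minimal $k$ with $a=x_1\cdots x_k$, $x_i\in X\cup X^{-1}$; $a\le_X b$ iff $\ell_X(a)+\ell_X(a^{-1}b)=\ell_X(b)$; $[1,b]_X=\{a:a\le_Xb\}$. The Hurwitz action of $B_n$ on $G^n$: $\sigma_i\cdot(g_1,\dots,g_n)=(g_1,\dots,g_{i-1},g_ig_{i+1}g_i^{-1},g_i,g_{i+2},\dots,g_n)$. The action $\star$ of $B_n$ on $F_n$ by automorphisms is determined by $\sigma_i\star f_i=f_{i+1}$, $\sigma_i\star f_{i+1}=f_{i+1}^{-1}f_if_{i+1}$, $\sigma_i\star f_j=f_j$ for $j\notin\{i,i+1\}$. *)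

(* Free group F_n, Coxeter group W and braid group B_n are
   handled through words: elements of F_n are words over the letters
   f_i^{+-1} (i : 'I_n) up to free equivalence; W is the group presented by
   (s_i s_j)^{m(i,j)} (finite m), i.e. words up to free reduction and
   insertion/deletion of relators; braids are words in sigma_i^{+-1}. *)
From Stdlib Require Import Relations.
From HB Require Import structures.
From mathcomp Require Import all_boot.
Set Implicit Arguments. Unset Strict Implicit. Unset Printing Implicit Defensive.

(* a letter (i, false) is f_i, (i, true) is f_i^{-1} *)
Definition letter (n : nat) := ('I_n * bool)%type.
Definition word (n : nat) := seq (letter n).

Definition inv_letter n (x : letter n) : letter n := (x.1, ~~ x.2).
Definition winv n (w : word n) : word n := rev (map (@inv_letter n) w).
Definition gen n (i : 'I_n) : word n := [:: (i, false)].

Inductive free_step n : word n -> word n -> Prop :=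
| FreeStep (u v : word n) (x : letter n) :
    free_step (u ++ v) (u ++ [:: x; inv_letter x] ++ v).

Definition feq n : relation (word n) := clos_refl_sym_trans _ (@free_step n).

(* Coxeter matrix: None encodes m = infinity *)
Definition coxeter_matrix n (m : 'I_n -> 'I_n -> option nat) : Prop :=
  (forall i j, m i j = m j i) /\
  (forall i, m i i = Some 1) /\
  (forall i j, i != j -> forall k, m i j = Some k -> 2 <= k).

Definition relator n (i j : 'I_n) (k : nat) : word n :=
  flatten (nseq k [:: (i, false); (j, false)]).

Inductive cox_step n (m : 'I_n -> 'I_n -> option nat) : word n -> word n -> Prop :=
| CoxFree (u v : word n) : free_step u v -> cox_step m u v
| CoxRel (u v : word n) (i j : 'I_n) (k : nat) :
    m i j = Some k -> cox_step m (u ++ v) (u ++ relator i j k ++ v).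

(* coxeq m u v  <->  pi(u) = pi(v) in W, where pi : F_n -> W, f_i |-> s_i *)
Definition coxeq n (m : 'I_n -> 'I_n -> option nat) : relation (word n) :=
  clos_refl_sym_trans _ (@cox_step n m).

(* R = conjugates of the f_i; elements of R \cup R^{-1} are conjugates of
   f_i^{+-1}, encoded by (w, x) |-> w x w^{-1} *)
Definition conj_elt n (c : word n * letter n) : word n := c.1 ++ [:: c.2] ++ winv c.1.

Definition Rprod n (a : word n) (k : nat) : Prop :=
  exists l : seq (word n * letter n),
    size l = k /\ feq a (flatten (map (@conj_elt n) l)).

Definition ellR n (a : word n) (k : nat) : Prop :=
  Rprod a k /\ forall j, j < k -> ~ Rprod a j.

Definition in_interval n (a g : word n) : Prop :=
  exists k1 k2 k3, [/\ ellR a k1, ellR (winv a ++ g) k2, ellR g k3 & k1 + k2 = k3].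

Definition cox_elt n : word n := [seq (i, false) | i <- enum 'I_n].

(* index i+1 (only meaningful when i.+1 < n) *)
Definition nxt n (i : 'I_n) : 'I_n :=
  if insub (i.+1) is Some k then k else i.

(* braid letters: (i, false) = sigma_i, (i, true) = sigma_i^{-1},
   acting on positions i, i+1 (0-based); valid if i.+1 < n *)
Definition bletter (n : nat) := ('I_n * bool)%type.
Definition valid_braid n (b : seq (bletter n)) := all (fun x : bletter n => (val x.1).+1 < n) b.

Definition star_gen n (b : bletter n) (j : 'I_n) : word n :=
  let i := b.1 in
  if ~~ b.2 then
    if j == i then gen (nxt i)
    else if val j == i.+1 then [:: (j, true); (i, false); (j, false)]
    else gen j
  else
    if val j == i.+1 then gen i
    else if j == i then [:: (i, false); (nxt i, false); (i, true)]
    else gen j.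

Definition star_letter n (b : bletter n) (x : letter n) : word n :=
  if x.2 then winv (star_gen b x.1) else star_gen b x.1.

Definition star_step n (b : bletter n) (a : word n) : word n :=
  flatten (map (star_letter b) a).

Definition star n (beta : seq (bletter n)) (a : word n) : word n :=
  foldr (@star_step n) a beta.

Definition hur_step n (b : bletter n) (t : 'I_n -> word n) : 'I_n -> word n :=
  let i := b.1 in
  fun k =>
  if ~~ b.2 then
    if k == i then t i ++ t (nxt i) ++ winv (t i)
    else if val k == i.+1 then t i
    else t k
  else
    if k == i then t (nxt i)
    else if val k == i.+1 then winv (t (nxt i)) ++ t i ++ t (nxt i)
    else t k.

Definition hurwitz n (beta : seq (bletter n)) (t : 'I_n -> word n) : 'I_n -> word n :=
  foldr (@hur_step n) t beta.

From Stdlib Require Import Relations.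
From HB Require Import structures.
From mathcomp Require Import all_boot.
Set Implicit Arguments. Unset Strict Implicit. Unset Printing Implicit Defensive.

(* Let phi_beta be the endomorphism of F_n sending f_k to the k-th entry of
   beta . (f_1, ..., f_n) under the Hurwitz action.  For a single braid
   generator one checks on generators that phi_sigma (sigma * f_k) = f_k, and
   since phi_{b beta} = phi_beta o phi_b, phi_beta is a left inverse of
   beta * _ on all of F_n.  If beta stabilises (s_1, ..., s_n), then
   pi o phi_beta agrees with pi on generators, hence everywhere, so
   pi (beta * a) = pi (phi_beta (beta * a)) = pi a for every a in F_n. *)

#[local] Arguments rst_step {A R x y}.
#[local] Arguments rst_sym {A R x y}.
#[local] Arguments rst_trans {A R x y z}.

Lemma rst_hom (A B : Type) (R : relation A) (S : relation B) (h : A -> B) :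
  (forall x y, R x y -> clos_refl_sym_trans _ S (h x) (h y)) ->
  forall x y, clos_refl_sym_trans _ R x y -> clos_refl_sym_trans _ S (h x) (h y).
Proof.
move=> hR x y; elim=> {x y} [x y /hR // | x | x y _ | x y z _ hxy _ hyz].
- exact: rst_refl.
- exact: rst_sym.
- exact: rst_trans hxy hyz.
Qed.

Section Words.
Variable n : nat.
Implicit Types (u v w p q : word n) (x : letter n) (f g : 'I_n -> word n).

Lemma inv_letterK : involutive (@inv_letter n).
Proof. by case=> i b; rewrite /inv_letter negbK. Qed.

Lemma winv_cat u v : winv (u ++ v) = winv v ++ winv u.
Proof. by rewrite /winv map_cat rev_cat. Qed.

Lemma winvK : involutive (@winv n).
Proof. by move=> u; rewrite /winv map_rev revK (mapK inv_letterK). Qed.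

Lemma winv_cons x u : winv (x :: u) = winv u ++ [:: inv_letter x].
Proof. by rewrite -cat1s winv_cat. Qed.

Definition subst_letter f x : word n := if x.2 then winv (f x.1) else f x.1.
Definition subst f w : word n := flatten (map (subst_letter f) w).

Lemma subst_cat f u v : subst f (u ++ v) = subst f u ++ subst f v.
Proof. by rewrite /subst map_cat flatten_cat. Qed.

Lemma subst_cons f x u : subst f (x :: u) = subst_letter f x ++ subst f u.
Proof. by []. Qed.

Lemma subst_gen f i : subst f (gen i) = f i.
Proof. by rewrite /subst /= cats0. Qed.

Lemma subst_letter_inv f x : subst_letter f (inv_letter x) = winv (subst_letter f x).
Proof. by case: x => i [] //; rewrite /subst_letter winvK. Qed.

Lemma subst_winv f w : subst f (winv w) = winv (subst f w).
Proof.
elim: w => [|x w IH] //.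
rewrite winv_cons subst_cat IH subst_cons winv_cat.
by rewrite /subst /= cats0 subst_letter_inv.
Qed.

Lemma subst_id w : subst (@gen n) w = w.
Proof. by elim: w => [|[i []] w IH] //; rewrite subst_cons IH. Qed.

Lemma subst_comp f g w : subst f (subst g w) = subst (fun k => subst f (g k)) w.
Proof.
elim: w => [|[i b] w IH] //.
by rewrite !subst_cons subst_cat IH; case: b; rewrite /subst_letter /= ?subst_winv.
Qed.

Lemma eq_subst f g w : f =1 g -> subst f w = subst g w.
Proof. by move=> efg; congr flatten; apply: eq_map => x; rewrite /subst_letter efg. Qed.

Lemma star_stepE (b : bletter n) w : star_step b w = subst (star_gen b) w.
Proof. by []. Qed.

Lemma free_step_ctx p q u v : free_step u v -> free_step (p ++ u ++ q) (p ++ v ++ q).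
Proof. by case=> u0 v0 x; rewrite -!catA !(catA p u0); constructor. Qed.

Lemma cox_step_ctx m p q u v : cox_step m u v -> cox_step m (p ++ u ++ q) (p ++ v ++ q).
Proof.
case=> [u0 v0 /(free_step_ctx p q) /CoxFree // | u0 v0 i j k mij].
by rewrite -!catA !(catA p u0); apply: CoxRel.
Qed.

Lemma feq_coxeq m u v : feq u v -> coxeq m u v.
Proof. by apply: (rst_hom (h := id)) => x y hxy; apply/rst_step/CoxFree. Qed.

(* Facts shared by [feq] and [coxeq]: both are the equivalence closure of a
   context-closed relation containing free reduction. *)
Section CongruenceClosure.
Variable R : relation (word n).
Hypothesis R_ctx : forall p q u v, R u v -> R (p ++ u ++ q) (p ++ v ++ q).
Hypothesis free_R : forall u v, free_step u v -> R u v.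
Local Notation E := (clos_refl_sym_trans _ R).

Lemma rst_ctx p q u v : E u v -> E (p ++ u ++ q) (p ++ v ++ q).
Proof.
by apply: (rst_hom (h := fun w => p ++ w ++ q)) => x y hxy; apply/rst_step/R_ctx.
Qed.

Lemma rst_cat u u' v v' : E u u' -> E v v' -> E (u ++ v) (u' ++ v').
Proof.
move=> /(rst_ctx [::] v) /= huu' /(rst_ctx u' [::]); rewrite !cats0.
exact: rst_trans.
Qed.

Lemma rst_cancel x u : E (x :: inv_letter x :: u) u.
Proof. by apply/rst_sym/rst_step/free_R; apply: (FreeStep [::]). Qed.

Lemma rst_mulV w : E (w ++ winv w) [::].
Proof.
elim: w => [|x w IH]; first exact: rst_refl.
rewrite winv_cons catA; apply: rst_trans _ (rst_cancel x [::]).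
by move: (rst_ctx [:: x] [:: inv_letter x] IH).
Qed.

Lemma rst_Vmul w : E (winv w ++ w) [::].
Proof. by rewrite -{2}(winvK w); apply: rst_mulV. Qed.

Lemma rst_winv u v : E u v -> E (winv u) (winv v).
Proof.
move=> huv.
have h1 : E (winv u) (winv u ++ v ++ winv v).
  by move: (rst_ctx (winv u) [::] (rst_sym (rst_mulV v))); rewrite !cats0.
have h2 : E (winv u ++ v ++ winv v) (winv u ++ u ++ winv v).
  exact/rst_ctx/rst_sym.
have h3 : E (winv u ++ u ++ winv v) (winv v).
  by rewrite catA; move: (rst_ctx [::] (winv v) (rst_Vmul u)).
exact: rst_trans h1 (rst_trans h2 h3).
Qed.

Lemma rst_subst f g w : (forall k, E (f k) (g k)) -> E (subst f w) (subst g w).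
Proof.
move=> hfg; elim: w => [|[i b] w IH]; first exact: rst_refl.
rewrite !subst_cons; apply: rst_cat IH.
by case: b; rewrite /subst_letter /=; [apply: rst_winv|]; apply: hfg.
Qed.

End CongruenceClosure.

Lemma feq_ctx p q u v : feq u v -> feq (p ++ u ++ q) (p ++ v ++ q).
Proof. exact: (rst_ctx free_step_ctx). Qed.

Lemma feq_cancel x u : feq (x :: inv_letter x :: u) u.
Proof. exact: (rst_cancel (fun _ _ h => h)). Qed.

Lemma feq_subst f u v : feq u v -> feq (subst f u) (subst f v).
Proof.
apply: (rst_hom (h := subst f)) => _ _ [u0 v0 x].
rewrite !subst_cat !subst_cons subst_letter_inv /= cats0.
apply/rst_sym.
exact: (feq_ctx _ _ (rst_mulV free_step_ctx (fun _ _ h => h) _)).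
Qed.

End Words.

Section Braids.
Variable n : nat.
Implicit Types (w : word n) (x y : letter n) (t : 'I_n -> word n).
Implicit Types (b : bletter n) (beta : seq (bletter n)).

Lemma feq_cancel_around x y : feq [:: x; inv_letter x; y; x; inv_letter x] [:: y].
Proof.
apply: rst_trans (feq_cancel x _) _.
by move: (feq_ctx [:: y] [::] (feq_cancel x [::])); rewrite cats0.
Qed.

Lemma hur_stepE b t k : hur_step b t k = subst t (hur_step b (@gen n) k).
Proof.
rewrite /hur_step; do 3?case: ifP => _;
  by rewrite ?subst_cat ?subst_winv ?subst_gen ?winvK.
Qed.

Lemma subst_hurwitz_cons b beta w :
  subst (hurwitz (b :: beta) (@gen n)) w =
  subst (hurwitz beta (@gen n)) (subst (hur_step b (@gen n)) w).
Proof. by rewrite subst_comp; apply: eq_subst => k; apply: hur_stepE. Qed.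

Lemma nxt_val (i : 'I_n) : i.+1 < n -> val (nxt i) = i.+1.
Proof. by move=> hi; rewrite /nxt insubT. Qed.

Lemma hur_step_star_gen b k : (val b.1).+1 < n ->
  feq (subst (hur_step b (@gen n)) (star_gen b k)) (gen k).
Proof.
case: b => i c /= /nxt_val; set j := nxt i => hj.
have ji : (j == i) = false.
  by apply/negbTE/eqP => eji; move: hj; rewrite eji => /n_Sn.
have kj k' : (val k' == i.+1) = (k' == j) by rewrite -hj.
have hur_i : hur_step (i, c) (@gen n) i =
    if c then gen j else [:: (i, false); (j, false); (i, true)].
  by rewrite /hur_step eqxx; case: c.
have hur_j : hur_step (i, c) (@gen n) j =
    if c then [:: (j, true); (i, false); (j, false)] else gen i.
  by rewrite /hur_step ji kj eqxx; case: c in hur_i *.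
rewrite /star_gen /= !kj -/j.
have [-> | hki] := eqVneq k i; last have [-> | hkj] := eqVneq k j.
- rewrite eq_sym ji; case: c in hur_i hur_j *; rewrite /= ?subst_gen ?hur_j.
    rewrite !subst_cons /subst_letter /= hur_i hur_j.
    exact: (feq_cancel_around (j, false)).
  exact: rst_refl.
- case: c in hur_i hur_j *; rewrite /= ?subst_gen ?hur_i; first exact: rst_refl.
  rewrite !subst_cons /subst_letter /= hur_i hur_j.
  exact: (feq_cancel_around (i, true)).
- rewrite if_same subst_gen /hur_step kj (negbTE hki) (negbTE hkj) if_same.
  exact: rst_refl.
Qed.

Lemma hur_step_star_step b w : (val b.1).+1 < n ->
  feq (subst (hur_step b (@gen n)) (star_step b w)) w.
Proof.
move=> hb; rewrite star_stepE subst_comp -{2}(subst_id w).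
apply: (rst_subst (@free_step_ctx n) (fun _ _ h => h)) => k.
exact: hur_step_star_gen.
Qed.

Lemma hurwitz_star beta w : valid_braid beta ->
  feq (subst (hurwitz beta (@gen n)) (star beta w)) w.
Proof.
elim: beta => [|b beta IH] /=; first by rewrite subst_id => _; apply: rst_refl.
case/andP=> hb /IH hbeta; rewrite subst_hurwitz_cons.
exact: rst_trans (feq_subst _ (hur_step_star_step _ hb)) hbeta.
Qed.

End Braids.

Theorem proposition4p8 (n : nat) (m : 'I_n -> 'I_n -> option nat)
  (hm : coxeter_matrix m)
  (beta : seq ('I_n * bool)) (hbeta : valid_braid beta)
  (hH : forall k : 'I_n, coxeq m (hurwitz beta (@gen n) k) (gen k))
  (a : word n) (ha : in_interval a (cox_elt n)) :
  coxeq m (star beta a) a.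
Proof.
have pi_hurwitz :
    coxeq m (subst (hurwitz beta (@gen n)) (star beta a)) (star beta a).
  rewrite -{2}(subst_id (star beta a)).
  exact: (rst_subst (@cox_step_ctx n m) (@CoxFree n m) _ hH).
exact: rst_trans (rst_sym pi_hurwitz) (feq_coxeq m (hurwitz_star a hbeta)).
Qed.
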